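(* Let $(X,+)$ be an uncountable abelian Polish group with a complete metric $d$. Let $\mathcal I\subseteq\mathcal P(X)$ be a proper, translation-invariant $\sigma$-ideal containing singletons and having a Borel base, such that for every Borel set $B\notin\mathcal I$ and every family $\mathcal D\subseteq\mathcal I$ with $|\mathcal D|<\mathfrak c$ we have $|B\setminus\bigcup\mathcal D|=\mathfrak c$, and such that there is $a$ in the range of $d$, $a\ne0$, with $\{y\in X:d(x,y)=a\}\in\mathcal I$ for every $x\in X$. If $2^\kappa\le\mathfrak c$ for every cardinal $\kappa<\mathfrak c$, then there exists a family $\{B_\xi:\xi<\mathfrak c\}$ of pairwise disjoint subsets of $X$ such that (1) every $B_\xi$ is completely $\mathcal I$-nonmeasurable, (2) no $B_\xi$ is a $2$-covering, and (3) $\{B_\xi:\xi<\mathfrak c\}$ is a ${<}\mathfrak c$-S-covering.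
   Context: $\mathfrak c=|\mathbb R|$. A set $N\subseteq X$ is completely $\mathcal I$-nonmeasurable if for every Borel $A\notin\mathcal I$ both $A\cap N\notin\mathcal I$ and $A\setminus N\notin\mathcal I$. A set $A\subseteq X$ is a $2$-covering if for every $C\subseteq X$ with $|C|=2$ there is $x\in X$ with $C+x\subseteq A$. A family $\mathcal A$ of pairwise disjoint subsets of $X$ is a ${<}\kappa$-S-covering if for every $F\subseteq X$ with $|F|<\kappa$ there is $t\in X$ such that $F+t\subseteq\bigcup\mathcal A$ and $|(F+t)\cap A|\le1$ for all $A\in\mathcal A$. *)

From Stdlib Require Import Reals Classical.
Open Scope R_scope.

Definition pset (T : Type) := T -> Prop.

Definition subset {T} (A B : pset T) : Prop := forall x, A x -> B x.

Definition card_le {T U} (A : pset T) (B : pset U) : Prop :=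
  exists f : T -> U, (forall x, A x -> B (f x)) /\
    (forall x y, A x -> A y -> f x = f y -> x = y).
Definition card_lt {T U} (A : pset T) (B : pset U) : Prop :=
  card_le A B /\ ~ card_le B A.
Definition card_eq {T U} (A : pset T) (B : pset U) : Prop :=
  card_le A B /\ card_le B A.

(* the continuum c = |R| is represented by the full set of reals *)
Definition continuum : pset R := fun _ => True.

Definition powerset {T} (K : pset T) : pset (pset T) := fun A => subset A K.

Definition has_two_elements {T} (C : pset T) : Prop :=
  exists a b, a <> b /\ forall x, C x <-> (x = a \/ x = b).

Definition is_metric {X} (d : X -> X -> R) : Prop :=
  (forall x y, 0 <= d x y) /\ (forall x y, d x y = 0 <-> x = y) /\
  (forall x y, d x y = d y x) /\ (forall x y z, d x z <= d x y + d y z).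

Definition d_open {X} (d : X -> X -> R) (U : pset X) : Prop :=
  forall x, U x -> exists eps, 0 < eps /\ forall y, d x y < eps -> U y.

Definition sigma_algebra {X} (S : pset (pset X)) : Prop :=
  S (fun _ => True) /\
  (forall A, S A -> S (fun x => ~ A x)) /\
  (forall A : nat -> pset X, (forall n, S (A n)) -> S (fun x => exists n, A n x)).

Definition Borel {X} (d : X -> X -> R) (A : pset X) : Prop :=
  forall S : pset (pset X), sigma_algebra S -> (forall U, d_open d U -> S U) -> S A.

Definition separable {X} (d : X -> X -> R) : Prop :=
  exists D : nat -> X, forall x eps, 0 < eps -> exists n, d x (D n) < eps.

Definition cauchy {X} (d : X -> X -> R) (s : nat -> X) : Prop :=
  forall eps, 0 < eps -> exists N, forall m n, (N <= m)%nat -> (N <= n)%nat -> d (s m) (s n) < eps.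
Definition converges {X} (d : X -> X -> R) (s : nat -> X) (l : X) : Prop :=
  forall eps, 0 < eps -> exists N, forall n, (N <= n)%nat -> d (s n) l < eps.
Definition complete_metric {X} (d : X -> X -> R) : Prop :=
  forall s, cauchy d s -> exists l, converges d s l.

Definition uncountable (X : Type) : Prop := ~ exists f : X -> nat, forall x y, f x = f y -> x = y.

Definition abelian_group {X} (add : X -> X -> X) (opp : X -> X) (zero : X) : Prop :=
  (forall x y z, add x (add y z) = add (add x y) z) /\
  (forall x y, add x y = add y x) /\
  (forall x, add zero x = x) /\ (forall x, add (opp x) x = zero).

Definition abelian_polish_group {X} (d : X -> X -> R)
  (add : X -> X -> X) (opp : X -> X) (zero : X) : Prop :=
  abelian_group add opp zero /\ is_metric d /\ complete_metric d /\ separable d /\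
  (forall x y eps, 0 < eps -> exists delta, 0 < delta /\
     forall x' y', d x x' < delta -> d y y' < delta -> d (add x y) (add x' y') < eps) /\
  (forall x eps, 0 < eps -> exists delta, 0 < delta /\
     forall x', d x x' < delta -> d (opp x) (opp x') < eps).

Definition translate {X} (add : X -> X -> X) (A : pset X) (t : X) : pset X :=
  fun y => exists a, A a /\ y = add a t.

Definition sigma_ideal {X} (I : pset (pset X)) : Prop :=
  (forall A B, subset A B -> I B -> I A) /\
  (forall A : nat -> pset X, (forall n, I (A n)) -> I (fun x => exists n, A n x)).
Definition proper_ideal {X} (I : pset (pset X)) : Prop := ~ I (fun _ => True).
Definition translation_invariant {X} (add : X -> X -> X) (I : pset (pset X)) : Prop :=
  forall A t, I A -> I (translate add A t).
Definition contains_singletons {X} (I : pset (pset X)) : Prop :=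
  forall x : X, I (fun y => y = x).
Definition has_Borel_base {X} (d : X -> X -> R) (I : pset (pset X)) : Prop :=
  forall A, I A -> exists B, Borel d B /\ subset A B /\ I B.

Definition completely_nonmeasurable {X} (d : X -> X -> R) (I : pset (pset X)) (N : pset X) : Prop :=
  forall A, Borel d A -> ~ I A ->
    ~ I (fun x => A x /\ N x) /\ ~ I (fun x => A x /\ ~ N x).

Definition two_covering {X} (add : X -> X -> X) (A : pset X) : Prop :=
  forall C, has_two_elements C -> exists x, subset (translate add C x) A.

Definition pairwise_disjoint {X} (F : pset (pset X)) : Prop :=
  forall A B, F A -> F B -> A <> B -> forall x, A x -> B x -> False.

(* F is a <kappa-S-covering, where kappa = |K| *)
Definition lt_S_covering {X V} (add : X -> X -> X) (K : pset V) (F : pset (pset X)) : Prop :=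
  pairwise_disjoint F /\
  forall G : pset X, card_lt G K -> exists t,
    subset (translate add G t) (fun x => exists A, F A /\ A x) /\
    forall A, F A -> forall u v, translate add G t u -> A u -> translate add G t v -> A v -> u = v.

Definition range {I T} (B : I -> pset T) : pset (pset T) := fun A => exists i, A = B i.

From Stdlib Require Import Reals Classical ClassicalEpsilon FunctionalExtensionality
  PropExtensionality Lia Lra Wellfounded ZArith.
From Stdlib Require Cantor.
From mathcomp Require ssreflect ssrbool eqtype boolp wochoice.
Open Scope R_scope.

(* Under [2^κ <= c] for all [κ < c], the continuum is regular and [c^κ = c] for [κ < c]. Hence the
   tasks "put a point of color [ξ] into the non-ideal Borel set [B]" ([ξ] real) and "color a
   translate of the small set [G]" can be enumerated along a well-order of [R] whose initial
   segments are small. Fix [h <> 0]. At each stage color fewer than [c] new points with pairwise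
   distinct colors, avoiding all previously colored points and their translates by [±h]: this is
   possible because a non-ideal Borel set minus a small set is nonempty, and so is [X] minus a small
   union of translates of a small set. The color classes are pairwise disjoint, meet every
   non-ideal Borel set (as do their complements, which contain other classes), never contain both
   [x] and [x + h], and every small set has a fully colored translate meeting each class at most
   once. *)

Lemma pset_ext {T} (A B : pset T) : (forall x, A x <-> B x) -> A = B.
Proof.
  intro H; apply functional_extensionality; intro x; apply propositional_extensionality; auto.
Qed.

Lemma choice_on {A B} (b0 : B) (P : A -> Prop) (Q : A -> B -> Prop) :
  (forall a, P a -> exists b, Q a b) -> exists f : A -> B, forall a, P a -> Q a (f a).
Proof.
  intro H.
  destruct (choice (fun a b => P a -> Q a b)) as [f Hf].
  - intro a. destruct (classic (P a)) as [Hp|Hp].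
    + destruct (H a Hp) as [b Hb]; exists b; auto.
    + exists b0; tauto.
  - exists f; auto.
Qed.

Definition full (T : Type) : pset T := fun _ => True.
Definition small {T} (A : pset T) : Prop := card_lt A continuum.
Definition countable (T : Type) : Prop := exists f : T -> nat, forall x y, f x = f y -> x = y.

Lemma card_le_trans {T U V} (A : pset T) (B : pset U) (C : pset V) :
  card_le A B -> card_le B C -> card_le A C.
Proof. intros [f [Hf1 Hf2]] [g [Hg1 Hg2]]; exists (fun x => g (f x)); split; auto. Qed.

Lemma card_le_subset {T} (A B : pset T) : subset A B -> card_le A B.
Proof. intro H; exists (fun x => x); split; auto. Qed.

Lemma card_le_image {T U} (x0 : T) (f : T -> U) (A : pset T) :
  card_le (fun y => exists x, A x /\ y = f x) A.
Proof.
  destruct (choice_on x0 (fun y => exists x, A x /\ y = f x) (fun y x => A x /\ y = f x))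
    as [g Hg]; auto.
  exists g; split; [intros y Hy; apply (Hg y Hy)|].
  intros y y' Hy Hy' E. rewrite (proj2 (Hg y Hy)), (proj2 (Hg y' Hy')), E; reflexivity.
Qed.

Lemma surjection_of_card_le {T} (A : pset T) :
  card_le A continuum -> (exists t, A t) ->
  exists tk : R -> T, (forall r, A (tk r)) /\ forall t, A t -> exists r, tk r = t.
Proof.
  intros [f [_ Hf]] [t0 Ht0].
  set (pick := fun r => epsilon (inhabits t0) (fun t => A t /\ f t = r)).
  exists (fun r => if excluded_middle_informative (A (pick r)) then pick r else t0); split.
  - intro r; destruct excluded_middle_informative; auto.
  - intros t Ht; exists (f t).
    assert (Hpick : A (pick (f t)) /\ f (pick (f t)) = f t)
      by (apply epsilon_spec; exists t; auto).
    destruct excluded_middle_informative as [_|]; [|tauto].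
    apply Hf; tauto.
Qed.

Lemma small_card_le {T U} (A : pset T) (B : pset U) : card_le A B -> small B -> small A.
Proof.
  intros H [H1 H2]; split; [eapply card_le_trans; eauto|].
  intro H3; apply H2; eapply card_le_trans; eauto.
Qed.

Lemma small_empty {T} (A : pset T) : (forall x, ~ A x) -> small A.
Proof.
  intro H; split.
  - exists (fun _ => 0); split; intros; exfalso; eapply H; eauto.
  - intros [f [Hf _]]; apply (H (f 0)); apply Hf; exact I.
Qed.

Lemma small_singleton {T} (x : T) : small (fun y => y = x).
Proof.
  split.
  - exists (fun _ => 0); split; [intros; exact I|]. intros a b Ha Hb _; congruence.
  - intros [f [Hf1 Hf2]].
    assert (E : 0 = 1) by (apply Hf2; [exact I | exact I | rewrite (Hf1 0 I), (Hf1 1 I); reflexivity]).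
    lra.
Qed.

Lemma countable_nat : countable nat.
Proof. exists (fun n => n); auto. Qed.

Lemma countable_bool : countable bool.
Proof. exists (fun b : bool => if b then 1%nat else 0%nat); intros [|] [|]; simpl; congruence. Qed.

Lemma countable_prod T U : countable T -> countable U -> countable (T * U).
Proof.
  intros [f Hf] [g Hg]; exists (fun p => Cantor.to_nat (f (fst p), g (snd p))).
  intros [a b] [a' b'] H. apply (f_equal Cantor.of_nat) in H.
  rewrite !Cantor.cancel_of_to in H. simpl in H. injection H; intros; f_equal; auto.
Qed.

Fixpoint list_code (l : list nat) : nat :=
  match l with nil => 0%nat | cons a l => S (Cantor.to_nat (a, list_code l)) end.

Lemma countable_list_nat : countable (list nat).
Proof.
  exists list_code.
  induction x as [|a l IH]; destruct y as [|b m]; cbn [list_code]; intro H;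
    try discriminate; auto.
  apply eq_add_S, (f_equal Cantor.of_nat) in H. rewrite !Cantor.cancel_of_to in H.
  injection H; intros; f_equal; auto.
Qed.

(* A triple [(a, b, n)] codes the rational [(a - b) / n]; a real is determined by the
   rationals below it. *)
Definition ratcode := (nat * nat * nat)%type.
Definition rat_of (p : ratcode) : R := let '(a, b, n) := p in (INR a - INR b) / INR n.
Definition lower_cut (x : R) : pset ratcode := fun p => rat_of p < x.

Lemma countable_ratcode : countable ratcode.
Proof. repeat apply countable_prod; apply countable_nat. Qed.

Lemma IZR_as_INR_diff (z : Z) : exists a b, IZR z = INR a - INR b.
Proof.
  destruct (Z.le_gt_cases 0 z) as [H|H].
  - exists (Z.to_nat z), 0%nat. rewrite (INR_IZR_INZ (Z.to_nat z)), Z2Nat.id by lia.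
    simpl; ring.
  - exists 0%nat, (Z.to_nat (- z)). rewrite (INR_IZR_INZ (Z.to_nat (- z))), Z2Nat.id by lia.
    rewrite opp_IZR; simpl; ring.
Qed.

Lemma rat_between (x y : R) : x < y -> exists p, x < rat_of p < y.
Proof.
  intro Hxy.
  destruct (INR_archimed (y - x) 1) as [n Hn]; [lra|].
  assert (Hn0 : 0 < INR n) by (destruct (Rle_or_lt (INR n) 0); nra).
  destruct (archimed (x * INR n)) as [H1 H2].
  destruct (IZR_as_INR_diff (up (x * INR n))) as [a [b Hab]].
  exists (a, b, n); simpl; rewrite <- Hab.
  split; apply Rmult_lt_reg_r with (INR n); auto;
    unfold Rdiv; rewrite Rmult_assoc, Rinv_l by lra; lra.
Qed.

Lemma lower_cut_inj x y : lower_cut x = lower_cut y -> x = y.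
Proof.
  intro H.
  destruct (Rtotal_order x y) as [Hl|[Heq|Hl]]; auto; exfalso;
    destruct (rat_between _ _ Hl) as [p Hp];
    assert (E : lower_cut x p <-> lower_cut y p) by (rewrite H; tauto);
    unfold lower_cut in E; lra.
Qed.

Module WellOrdering.
Import ssreflect ssrbool eqtype boolp wochoice.

Lemma well_order_exists (T : Type) :
  exists W : T -> T -> Prop, well_founded W /\ forall x y, W x y \/ x = y \/ W y x.
Proof.
have [Rl Rwo] := well_ordering_principle (classicType T).
have Rwoc : wo_chain Rl (mem (@predT (classicType T))) by apply: withinW.
have Rtot := wo_chainW Rwoc; have Ranti := wo_chain_antisymmetric Rwoc.
exists (fun x y : T => Rl x y /\ x <> y); split.
- move=> a; apply: NNPP => Hna.
  pose A := fun y : classicType T => `[< ~ Acc (fun x y : T => Rl x y /\ x <> y) y >].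
  have [|z [[/asboolP Hz Hlb] _]] := Rwo (SimplPred A); first by exists a; apply/asboolP.
  apply: Hz; constructor => y [Hyz Hne]; apply: NNPP => Hy.
  by apply: Hne; apply: Ranti => //; rewrite Hyz Hlb //; apply/asboolP.
- move=> x y; case: (Classical_Prop.classic (x = y)) => [|Hxy]; first by auto.
  by case/orP: (Rtot x y isT isT) => H; [left | right; right]; split; auto.
Qed.
End WellOrdering.

Lemma wf_minimal {T} (W : T -> T -> Prop) (P : T -> Prop) :
  well_founded W -> (exists x, P x) -> exists x, P x /\ forall y, W y x -> ~ P y.
Proof.
  intros Hwf [x Hx]. apply NNPP; intro Hn.
  assert (Hnone : forall z, ~ P z).
  { intro z; induction z as [z IH] using (well_founded_ind Hwf).
    intro Hz; apply Hn; exists z; split; auto. }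
  exact (Hnone x Hx).
Qed.

(* Transfinite recursion in relational form: [P a f y] may only depend on [f] below [a]. *)
Lemma wf_recursive_choice {A B} (b0 : B) (W : A -> A -> Prop)
  (P : A -> (A -> B) -> B -> Prop) :
  well_founded W ->
  (forall a f g y, (forall b, W b a -> f b = g b) -> P a f y -> P a g y) ->
  (forall a f, (forall b, W b a -> P b f (f b)) -> exists y, P a f y) ->
  exists f, forall a, P a f (f a).
Proof.
  intros Hwf Hloc Hstep.
  set (below := fun a (rec : forall b, W b a -> B) b =>
    match excluded_middle_informative (W b a) with left p => rec b p | right _ => b0 end).
  set (F := fun a rec => epsilon (inhabits b0) (P a (below a rec))).
  set (f := Fix Hwf (fun _ => B) F).
  assert (Hf : forall a, f a = F a (fun b _ => f b)).
  { intro a; unfold f; rewrite Fix_eq; [reflexivity|]; intros x r1 r2 Hr; unfold F, below.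
    do 2 f_equal; apply functional_extensionality; intro b.
    destruct excluded_middle_informative; auto. }
  exists f; intro a; induction a as [a IH] using (well_founded_ind Hwf).
  assert (Hagree : forall b, W b a -> f b = below a (fun b _ => f b) b)
    by (intros b Hb; unfold below; destruct excluded_middle_informative; tauto).
  destruct (Hstep a f IH) as [y Hy].
  apply (Hloc a (below a (fun b _ => f b))); [intros b Hb; symmetry; auto|].
  rewrite Hf; apply epsilon_spec; exists y; eapply Hloc; eauto.
Qed.

(** * Borel sets and their codes *)

Section BorelClosure.
Context {X : Type} (d : X -> X -> R).

Lemma Borel_full : Borel d (full X).
Proof. intros S HS _; exact (proj1 HS). Qed.

Lemma Borel_compl A : Borel d A -> Borel d (fun x => ~ A x).
Proof. intros HA S HS HO; apply (proj1 (proj2 HS)), HA; auto. Qed.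

Lemma Borel_union (A : nat -> pset X) :
  (forall n, Borel d (A n)) -> Borel d (fun x => exists n, A n x).
Proof. intros HA S HS HO; apply (proj2 (proj2 HS)); intro n; apply HA; auto. Qed.

Lemma Borel_diff A C : Borel d A -> Borel d C -> Borel d (fun x => A x /\ ~ C x).
Proof.
  intros HA HC.
  replace (fun x => A x /\ ~ C x)
    with (fun x => ~ exists n : nat, (match n with O => fun y => ~ A y | _ => C end) x).
  - apply Borel_compl, Borel_union; intros [|n]; auto; apply Borel_compl; auto.
  - apply pset_ext; intro x; split.
    + intro H; split; [apply NNPP|]; intro H'; apply H; [exists O | exists 1%nat]; auto.
    + intros [H1 H2] [[|n] Hn]; auto.
Qed.
End BorelClosure.

Inductive code : Type :=
  | CEmpty | CBall (k j : nat) | CCompl (c : code) | CUnion (f : nat -> code).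

(* [code_path c] reads the constructors met along a path; it determines [c]. *)
Fixpoint code_path (c : code) (s : list nat) : nat :=
  match c, s with
  | CEmpty, _ => 0
  | CBall _ _, nil => 1
  | CBall k _, cons O _ => k
  | CBall _ j, cons (S _) _ => j
  | CCompl _, nil => 2
  | CCompl c, cons _ s => code_path c s
  | CUnion _, nil => 3
  | CUnion f, cons n s => code_path (f n) s
  end.

Lemma code_path_inj c1 c2 : (forall s, code_path c1 s = code_path c2 s) -> c1 = c2.
Proof.
  revert c2; induction c1 as [|k j|c IH|f IH]; intros [|k' j'|c'|f'] H;
    try (specialize (H nil); simpl in H; discriminate).
  - reflexivity.
  - f_equal; [apply (H (cons O nil)) | apply (H (cons 1%nat nil))].
  - f_equal; apply IH; intro s; apply (H (cons O s)).
  - f_equal; apply functional_extensionality; intro n; apply IH; intro s; apply (H (cons n s)).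
Qed.

Section BorelCodes.
Variables (X : Type) (d : X -> X -> R) (s : nat -> X).
Hypothesis Hd : is_metric d.
Hypothesis s_dense : forall x eps, 0 < eps -> exists n, d x (s n) < eps.

Fixpoint interp (c : code) : pset X :=
  match c with
  | CEmpty => fun _ => False
  | CBall k j => fun y => d (s k) y < / INR (S j)
  | CCompl c' => fun y => ~ interp c' y
  | CUnion f => fun y => exists n, interp (f n) y
  end.

Lemma open_coded U : d_open d U -> exists c, U = interp c.
Proof.
  intro HU. destruct Hd as [_ [_ [Hsym Htri]]].
  exists (CUnion (fun n => let '(k, j) := Cantor.of_nat n in
    if excluded_middle_informative (subset (interp (CBall k j)) U) then CBall k j else CEmpty)).
  apply pset_ext; intro x; split.
  - intro Hx. destruct (HU x Hx) as [eps [Heps Hball]].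
    destruct (INR_archimed (eps / 2) 1) as [j Hj]; [lra|].
    assert (Hj' : / INR (S j) < eps / 2).
    { rewrite S_INR. assert (0 <= INR j) by apply pos_INR.
      apply (Rmult_lt_reg_l (INR j + 1)); [lra|]. rewrite Rinv_r by lra. nra. }
    assert (Hpos : 0 < / INR (S j)) by (apply Rinv_0_lt_compat, lt_0_INR; lia).
    destruct (s_dense x _ Hpos) as [k Hk].
    exists (Cantor.to_nat (k, j)). rewrite Cantor.cancel_of_to.
    destruct excluded_middle_informative as [_|Hnin].
    + cbn [interp]. rewrite Hsym; auto.
    + exfalso; apply Hnin; intros y Hy; cbn [interp] in Hy. apply Hball.
      pose proof (Htri x (s k) y). lra.
  - intros [n Hn]. destruct (Cantor.of_nat n) as [k j].
    destruct excluded_middle_informative as [Hin|]; [apply Hin, Hn | destruct Hn].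
Qed.

Lemma Borel_coded A : Borel d A -> exists c, A = interp c.
Proof.
  intro HA; apply (HA (fun B => exists c, B = interp c)); [split; [|split]|].
  - exists (CCompl CEmpty); apply pset_ext; intro x; simpl; unfold full; tauto.
  - intros B [c ->]; exists (CCompl c); reflexivity.
  - intros B HB; destruct (choice _ HB) as [f Hf]; exists (CUnion f).
    apply pset_ext; intro x; simpl.
    split; intros [n Hn]; exists n; [rewrite <- Hf | rewrite Hf]; auto.
  - apply open_coded.
Qed.
End BorelCodes.

Section AbelianGroup.
Context {X : Type} {add : X -> X -> X} {opp : X -> X} {zero : X}.
Hypothesis Hgrp : abelian_group add opp zero.

Lemma add_comm x y : add x y = add y x.
Proof. apply Hgrp. Qed.

Lemma add_subK a t : add (add a t) (opp t) = a.
Proof.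
  destruct Hgrp as [Hassoc [Hcomm [H0 Hopp]]].
  rewrite <- Hassoc, (Hcomm t), Hopp, Hcomm, H0; reflexivity.
Qed.

Lemma add_addK a t : add (add a (opp t)) t = a.
Proof.
  destruct Hgrp as [Hassoc [Hcomm [H0 Hopp]]].
  rewrite <- Hassoc, Hopp, Hcomm, H0; reflexivity.
Qed.

Lemma add_rcancel a b t : add a t = add b t -> a = b.
Proof. intro H; rewrite <- (add_subK a t), <- (add_subK b t), H; reflexivity. Qed.

Lemma small_shift (U : pset X) s : small U -> small (fun x => U (add x s)).
Proof.
  apply small_card_le. exists (fun x => add x s); split; auto.
  intros x y _ _; apply add_rcancel.
Qed.

Lemma not_two_covering_of_no_pair (N : pset X) h :
  h <> zero -> (forall x, N x -> N (add x h) -> False) -> ~ two_covering add N.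
Proof.
  intros Hh Hpair Hcov.
  destruct (Hcov (fun x => x = zero \/ x = h)) as [x Hx].
  - exists zero, h; split; [congruence | tauto].
  - apply (Hpair x).
    + replace x with (add zero x) by apply Hgrp. apply Hx; exists zero; auto.
    + rewrite add_comm. apply Hx; exists h; auto.
Qed.
End AbelianGroup.

(** * Consequences of [2^κ <= c] for [κ < c] *)

Section Continuum.
Hypothesis R_uncountable : ~ countable R.
Hypothesis pow_small : forall (T : Type) (K : pset T), small K -> card_le (powerset K) continuum.

Lemma small_countable {T} : countable T -> forall A : pset T, small A.
Proof.
  intros [g Hg] A; split.
  - exists (fun x => INR (g x)); split; [intros; exact I|].
    intros x y _ _ H; apply INR_eq in H; auto.
  - intros [f [_ Hf]]. apply R_uncountable. exists (fun x => g (f x)).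
    intros x y H; apply Hf; auto; exact I.
Qed.

Lemma pset_countable_inj (T : Type) :
  countable T -> exists F : pset T -> R, forall A B, F A = F B -> A = B.
Proof.
  intro Hc. destruct (pow_small T (full T) (small_countable Hc _)) as [F [_ HF]].
  exists F; intros A B H; apply HF; auto; intros x _; exact I.
Qed.

Lemma R_pairing :
  exists pr : R -> R -> R, forall a b a' b', pr a b = pr a' b' -> a = a' /\ b = b'.
Proof.
  destruct (pset_countable_inj (bool * ratcode)
    (countable_prod _ _ countable_bool countable_ratcode)) as [F HF].
  exists (fun a b => F (fun p => lower_cut (if fst p then a else b) (snd p))).
  intros a b a' b' H. apply HF in H.
  split; apply lower_cut_inj; apply functional_extensionality; intro p;
    [exact (f_equal (fun G => G (true, p)) H) | exact (f_equal (fun G => G (false, p)) H)].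
Qed.

(* A function on [S] is coded by the set of pairs [(y, q)] with [q] below its value at [y]. *)
Lemma small_functions_inj (Y : Type) (S : pset Y) :
  small (fun p : Y * ratcode => S (fst p)) ->
  exists Enc : (Y -> R) -> R,
    forall phi psi, Enc phi = Enc psi -> forall y, S y -> phi y = psi y.
Proof.
  intro HK. destruct (pow_small _ _ HK) as [F [_ HF]].
  exists (fun phi => F (fun p => S (fst p) /\ lower_cut (phi (fst p)) (snd p))).
  intros phi psi HE y Hy.
  apply HF in HE; [|intros p [Hp _]; exact Hp ..].
  apply lower_cut_inj, pset_ext; intro p.
  assert (E := f_equal (fun G => G (y, p)) HE); simpl in E.
  split; intro H; generalize (conj Hy H); [rewrite E | rewrite <- E]; tauto.
Qed.

Lemma not_covered_gen (Y : Type) (S : pset Y) (V : Y -> pset R) :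
  small (fun p : Y * ratcode => S (fst p)) ->
  (forall y, S y -> small (V y)) -> ~ (forall r, exists y, S y /\ V y r).
Proof.
  intros HK HV Hcov.
  destruct (small_functions_inj Y S HK) as [Enc HEnc].
  (* Diagonalize against the fewer than c values taken at [y] by functions coded in [V y]. *)
  assert (Hmiss : forall y, S y -> exists v, ~ exists phi, V y (Enc phi) /\ phi y = v).
  { intros y Hy. apply NNPP; intro Hall.
    assert (Hall' : forall v, exists phi, V y (Enc phi) /\ phi y = v)
      by (intro v; apply NNPP; intro Hn; apply Hall; exists v; auto).
    destruct (choice _ Hall') as [ph Hph].
    apply (HV y Hy). exists (fun v => Enc (ph v)); split.
    - intros v _; apply Hph.
    - intros v w _ _ E. rewrite <- (proj2 (Hph v)), <- (proj2 (Hph w)).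
      exact (HEnc _ _ E y Hy). }
  destruct (choice_on 0 S _ Hmiss) as [diag Hdiag].
  destruct (Hcov (Enc diag)) as [y [Hy HVy]].
  apply (Hdiag y Hy); exists diag; auto.
Qed.

Lemma small_prod_ratcode (Y : Type) (S : pset Y) :
  small S -> small (fun p : Y * ratcode => S (fst p)).
Proof.
  intro HS. pose proof HS as [[g [_ Hg]] _]. split.
  - destruct R_pairing as [pr Hpr]. destruct countable_ratcode as [n Hn].
    exists (fun p => pr (g (fst p)) (INR (n (snd p)))); split; [intros; exact I|].
    intros [y q] [y' q'] Hy Hy' E. apply Hpr in E as [E1 E2].
    apply INR_eq, Hn in E2. simpl in *. f_equal; auto.
  - intros [j [Hj1 Hj2]].
    apply (not_covered_gen ratcode (full ratcode) (fun q r => snd (j r) = q)).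
    + apply small_countable, countable_prod; apply countable_ratcode.
    + intros q _. apply (small_card_le _ S); auto.
      exists (fun r => fst (j r)); split; [intros r _; apply (Hj1 r I)|].
      intros r r' Hr Hr' E. apply Hj2; try exact I.
      apply injective_projections; congruence.
    + intro r; exists (snd (j r)); split; [exact I | reflexivity].
Qed.

(* Regularity of c. *)
Lemma not_covered (Y : Type) (S : pset Y) (V : Y -> pset R) :
  small S -> (forall y, S y -> small (V y)) -> ~ (forall r, exists y, S y /\ V y r).
Proof. intro HS; apply not_covered_gen, small_prod_ratcode, HS. Qed.

Lemma small_union (Y T : Type) (S : pset Y) (U : Y -> pset T) :
  small S -> (forall y, S y -> small (U y)) -> small (fun t => exists y, S y /\ U y t).
Proof.
  intros HS HU.
  destruct (classic (exists t y, S y /\ U y t)) as [[t0 [y0 _]]|Hne].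
  2:{ apply small_empty; intros t Ht; apply Hne; exists t; auto. }
  split.
  - destruct R_pairing as [pr Hpr]. pose proof HS as [[g [_ Hg]] _].
    destruct (choice_on y0 (fun t => exists y, S y /\ U y t) (fun t y => S y /\ U y t))
      as [yt Hyt]; auto.
    destruct (choice_on (fun _ : T => 0) S
      (fun y (f : T -> R) => forall a b, U y a -> U y b -> f a = f b -> a = b)) as [io Hio].
    { intros y Hy. destruct (HU y Hy) as [[f [_ Hf]] _]. exists f; auto. }
    exists (fun t => pr (g (yt t)) (io (yt t) t)); split; [intros; exact I|].
    intros a b Ha Hb E. apply Hpr in E as [E1 E2].
    destruct (Hyt a Ha) as [Sa Ua]; destruct (Hyt b Hb) as [Sb Ub].
    apply Hg in E1; auto. rewrite <- E1 in Ub, E2. apply (Hio (yt a)); auto.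
  - intros [j [Hj1 Hj2]].
    apply (not_covered Y S (fun y r => U y (j r)) HS).
    + intros y Hy. apply (small_card_le _ (U y)); auto. exists j; split; auto.
      intros a b _ _ E; apply Hj2; auto; exact I.
    + intro r. destruct (Hj1 r I) as [y Hy]. exists y; auto.
Qed.

Lemma small_union2 {T} (A B : pset T) : small A -> small B -> small (fun x => A x \/ B x).
Proof.
  intros HA HB.
  apply (small_card_le _ (fun t => exists b : bool, full bool b /\ (if b then A else B) t)).
  - apply card_le_subset. intros x [H|H]; [exists true | exists false]; split; auto; exact I.
  - apply small_union; [apply small_countable, countable_bool | intros [|] _; auto].
Qed.

Lemma small_segments_well_order : exists W : R -> R -> Prop,
  well_founded W /\ (forall x y, W x y \/ x = y \/ W y x) /\ forall x, small (fun y => W y x).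
Proof.
  destruct (WellOrdering.well_order_exists R) as [W0 [Hwf Htot]].
  destruct (classic (exists x, card_le continuum (fun y => W0 y x))) as [Hex|Hnex].
  - (* transport along an injection into the least segment of size c *)
    destruct (wf_minimal _ _ Hwf Hex) as [x0 [[g [Hg1 Hg2]] Hmin]].
    exists (fun a b => W0 (g a) (g b)). split; [|split].
    + apply (wf_inverse_image _ _ W0 g Hwf).
    + intros a b. destruct (Htot (g a) (g b)) as [H|[H|H]]; auto.
      right; left; apply Hg2; auto; exact I.
    + intro b; split; [apply card_le_subset; intros y _; exact I|].
      intros [f [Hf1 Hf2]]. apply (Hmin (g b) (Hg1 b I)).
      exists (fun x => g (f x)); split; [intros x _; apply Hf1, I|].
      intros x y _ _ E. apply Hf2; try exact I. apply Hg2; auto; exact I.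
  - exists W0; split; [|split]; auto.
    intro b; split; [apply card_le_subset; intros y _; exact I|].
    intro H; apply Hnex; exists b; auto.
Qed.

Lemma small_bounded (W : R -> R -> Prop) :
  (forall x y, W x y \/ x = y \/ W y x) -> (forall x, small (fun y => W y x)) ->
  forall S : pset R, small S -> exists b, forall s, S s -> W s b.
Proof.
  intros Htot Hseg S HS. apply NNPP; intro Hn.
  apply (not_covered R S (fun s r => W r s \/ r = s) HS).
  - intros s _. apply small_union2; [apply Hseg | apply small_singleton].
  - intro r. apply NNPP; intro Hn2. apply Hn. exists r. intros s Hs.
    destruct (Htot s r) as [H|[H|H]]; auto; exfalso; apply Hn2; exists s; split; auto.
Qed.

Lemma small_subsets_inj :
  exists F : pset R -> R, forall A B, small A -> small B -> F A = F B -> A = B.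
Proof.
  destruct small_segments_well_order as [W [_ [Htot Hseg]]].
  destruct (choice (fun b (F : pset R -> R) => forall A B,
    subset A (fun y => W y b) -> subset B (fun y => W y b) -> F A = F B -> A = B))
    as [code_below Hcode].
  { intro b. destruct (pow_small _ _ (Hseg b)) as [F [_ HF]]. exists F; auto. }
  destruct (choice_on 0 (fun A : pset R => small A) (fun A b => forall s, A s -> W s b))
    as [bound Hbound].
  { intros A HA; apply small_bounded; auto. }
  destruct R_pairing as [pr Hpr].
  exists (fun A => pr (bound A) (code_below (bound A) A)).
  intros A B HA HB E. apply Hpr in E as [E1 E2]. rewrite <- E1 in E2.
  apply (Hcode (bound A)); auto; intros s Hs; [|rewrite E1]; apply Hbound; auto.
Qed.

Lemma Borel_card_le_continuum {X} (d : X -> X -> R) :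
  is_metric d -> separable d -> card_le (Borel d) continuum.
Proof.
  intros Hd [s Hs].
  destruct (pset_countable_inj (list nat * nat)
    (countable_prod _ _ countable_list_nat countable_nat)) as [F HF].
  destruct (choice_on CEmpty (Borel d) (fun A c => A = interp X d s c)) as [cd Hcd].
  { intros A HA; apply Borel_coded; auto. }
  exists (fun A => F (fun p => code_path (cd A) (fst p) = snd p)); split; [intros; exact I|].
  intros A B HA HB E. apply HF in E.
  rewrite (Hcd A HA), (Hcd B HB); f_equal; apply code_path_inj; intro l.
  assert (E' := f_equal (fun G => G (l, code_path (cd A) l)) E); simpl in E'.
  symmetry; rewrite <- E'; reflexivity.
Qed.

(** * The transfinite construction *)

Section Construction.
Variables (X : Type) (add : X -> X -> X) (opp : X -> X) (zero : X).
Hypothesis Hgrp : abelian_group add opp zero.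
Hypothesis X_large : ~ small (full X).
Variable Big : pset (pset X).
Hypothesis Big_avoid : forall B, Big B -> forall S : pset X, small S -> exists x, B x /\ ~ S x.
Variable h : X.
Hypothesis h_nonzero : h <> zero.

Lemma avoiding_translate (G F : pset X) :
  small G -> small F -> exists t, forall g, G g -> ~ F (add g t).
Proof.
  intros HG HF.
  assert (Hbad : small (fun t => exists g, G g /\ F (add g t))).
  { apply small_union; auto; intros g _.
    apply (small_card_le _ F); auto. exists (add g); split; auto.
    intros x y _ _ E. rewrite !(add_comm Hgrp g) in E. exact (add_rcancel Hgrp _ _ _ E). }
  apply NNPP; intro Hn. apply X_large; eapply small_card_le; [apply card_le_subset | exact Hbad].
  intros t _. apply NNPP; intro Ht; apply Hn; exists t; intros g Hg HFg; apply Ht; eauto.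
Qed.

Inductive task : Type := Meet (xi : R) (B : pset X) | Cover (G : pset X).

Definition valid_task (t : task) : Prop :=
  match t with Meet _ B => Big B | Cover G => small G end.

Definition coloring := X -> option R.

Definition support (f : coloring) : pset X := fun x => f x <> None.

Definition fresh_coloring (F : pset X) (f : coloring) : Prop :=
  (forall x, support f x -> ~ F x) /\
  (forall x y c, f x = Some c -> f y = Some c -> x = y) /\
  small (support f).

Definition solves (f : coloring) (t : task) : Prop :=
  match t with
  | Meet xi B => exists x, B x /\ f x = Some xi
  | Cover G => exists t, forall g, G g -> support f (add g t)
  end.

Lemma meet_solvable xi B F :
  Big B -> small F -> exists f, fresh_coloring F f /\ solves f (Meet xi B).
Proof.
  intros HB HF. destruct (Big_avoid B HB F HF) as [x0 [Hx0 Hnx0]].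
  exists (fun y => if excluded_middle_informative (y = x0) then Some xi else None).
  unfold fresh_coloring, support; split; [split; [|split]|].
  - intro x; destruct excluded_middle_informative; [subst; auto | tauto].
  - intros x y c; do 2 destruct excluded_middle_informative; congruence.
  - apply (small_card_le _ (fun y => y = x0)); [|apply small_singleton].
    apply card_le_subset; intro y; destruct excluded_middle_informative; tauto.
  - exists x0; split; auto; destruct excluded_middle_informative; tauto.
Qed.

Lemma cover_solvable G F :
  small G -> small F -> exists f, fresh_coloring F f /\ solves f (Cover G).
Proof.
  intros HG HF. destruct (avoiding_translate G F HG HF) as [t Ht].
  pose proof HG as [[j [_ Hj]] _].
  exists (fun y => if excluded_middle_informative (G (add y (opp t)))
              then Some (j (add y (opp t))) else None).
  unfold fresh_coloring, support; split; [split; [|split]|].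
  - intro x; destruct excluded_middle_informative as [Hx|]; [|tauto].
    intros _ HFx; apply (Ht _ Hx); rewrite (add_addK Hgrp); exact HFx.
  - intros x y c; do 2 destruct excluded_middle_informative; try discriminate.
    intros Ex Ey. apply (add_rcancel Hgrp _ _ (opp t)), Hj; auto; congruence.
  - apply (small_card_le _ G); auto. exists (fun y => add y (opp t)); split.
    + intro y; destruct excluded_middle_informative; tauto.
    + intros x y _ _; apply (add_rcancel Hgrp).
  - exists t; intros g Hg; unfold support; rewrite (add_subK Hgrp).
    destruct excluded_middle_informative; [discriminate | tauto].
Qed.

Variable W : R -> R -> Prop.
Hypothesis W_wf : well_founded W.
Hypothesis W_total : forall x y, W x y \/ x = y \/ W y x.
Hypothesis W_small : forall x, small (fun y => W y x).
Variable tk : R -> task.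
Hypothesis tk_valid : forall a, valid_task (tk a).
Hypothesis tk_onto : forall t, valid_task t -> exists a, tk a = t.

Definition used (st : R -> coloring) (a : R) : pset X :=
  fun x => exists b, W b a /\ support (st b) x.

(* Avoiding [x - h] and [x + h] as well keeps [x] and [x + h] apart across stages. *)
Definition forbidden (st : R -> coloring) (a : R) : pset X :=
  fun x => used st a x \/ used st a (add x (opp h)) \/ used st a (add x h).

Definition stage_ok (a : R) (st : R -> coloring) (f : coloring) : Prop :=
  fresh_coloring (forbidden st a) f /\ solves f (tk a).

Lemma forbidden_small st a :
  (forall b, W b a -> small (support (st b))) -> small (forbidden st a).
Proof.
  intro Hst. assert (HU : small (used st a)) by (apply small_union; [apply W_small | auto]).
  apply small_union2; [|apply small_union2]; try apply (small_shift Hgrp); auto.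
Qed.

Lemma stages_exist : exists st : R -> coloring, forall a, stage_ok a st (st a).
Proof.
  apply (wf_recursive_choice (fun _ => None) W stage_ok W_wf).
  - intros a st st' f Hagree.
    assert (E : used st a = used st' a).
    { apply pset_ext; intro x; unfold used.
      split; intros [b [Hb Hx]]; exists b; [rewrite <- Hagree | rewrite Hagree]; auto. }
    unfold stage_ok, forbidden; rewrite E; auto.
  - intros a st Hprev.
    assert (HF : small (forbidden st a))
      by (apply forbidden_small; intros b Hb; apply (Hprev b Hb)).
    unfold stage_ok; generalize (tk_valid a); destruct (tk a); simpl; intro Hv;
      [apply meet_solvable | apply cover_solvable]; auto.
Qed.

Section Stages.
Variable st : R -> coloring.
Hypothesis st_ok : forall a, stage_ok a st (st a).

Definition color_class (xi : R) : pset X := fun x => exists a, st a x = Some xi.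

Lemma later_stage_avoids a b x y :
  W b a -> support (st b) x -> (y = x \/ y = add x h \/ y = add x (opp h)) ->
  ~ support (st a) y.
Proof.
  intros Hw Hx Hy Hsy. apply (proj1 (proj1 (st_ok a)) y Hsy).
  assert (Hu : used st a x) by (exists b; auto).
  destruct Hy as [Hy|[Hy|Hy]]; subst y; [left | right; left | right; right];
    rewrite ?(add_subK Hgrp), ?(add_addK Hgrp); auto.
Qed.

Lemma colored_once a a' x c c' :
  st a x = Some c -> st a' x = Some c' -> a = a' /\ c = c'.
Proof.
  intros H H'. destruct (W_total a a') as [Hw|[<-|Hw]].
  - exfalso; apply (later_stage_avoids a' a x x); auto; congruence.
  - split; congruence.
  - exfalso; apply (later_stage_avoids a a' x x); auto; congruence.
Qed.

Lemma color_class_disjoint xi eta x : color_class xi x -> color_class eta x -> xi = eta.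
Proof. intros [a Ha] [b Hb]; exact (proj2 (colored_once _ _ _ _ _ Ha Hb)). Qed.

Lemma color_class_meets xi B : Big B -> exists x, B x /\ color_class xi x.
Proof.
  intro HB. destruct (tk_onto (Meet xi B) HB) as [a Ha].
  assert (Hsolved := proj2 (st_ok a)); rewrite Ha in Hsolved.
  destruct Hsolved as [x [Hx Hc]]; exists x; split; [exact Hx | exists a; exact Hc].
Qed.

Lemma color_class_no_h_pair xi x : color_class xi x -> color_class xi (add x h) -> False.
Proof.
  intros [a Ha] [a' Ha']. destruct (W_total a a') as [Hw|[<-|Hw]].
  - apply (later_stage_avoids a' a x (add x h)); auto; congruence.
  - apply h_nonzero, (add_rcancel Hgrp _ _ x).
    rewrite (add_comm Hgrp h), (proj1 (proj2 (proj2 Hgrp))); symmetry.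
    exact (proj1 (proj2 (proj1 (st_ok a))) _ _ _ Ha Ha').
  - apply (later_stage_avoids a a' (add x h) x Hw); [congruence | |congruence].
    right; right; rewrite (add_subK Hgrp); reflexivity.
Qed.

Lemma color_classes_S_covering : lt_S_covering add continuum (range color_class).
Proof.
  split.
  - intros A B [xi ->] [eta ->] Hne x H1 H2.
    apply Hne; rewrite (color_class_disjoint _ _ _ H1 H2); reflexivity.
  - intros G HG. destruct (tk_onto (Cover G) HG) as [a Ha].
    assert (Hsolved := proj2 (st_ok a)); rewrite Ha in Hsolved; destruct Hsolved as [t Ht].
    assert (Hcol : forall y, translate add G t y -> exists c, st a y = Some c).
    { intros y [g [Hg ->]]. destruct (st a (add g t)) as [c|] eqn:E; [eauto|].
      exfalso; exact (Ht g Hg E). }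
    exists t; split.
    + intros y Hy. destruct (Hcol y Hy) as [c Hc].
      exists (color_class c); split; [exists c; reflexivity | exists a; exact Hc].
    + intros A [xi ->] u v Hu [b Hb] Hv [b' Hb'].
      destruct (Hcol u Hu) as [c Hc]; destruct (Hcol v Hv) as [c' Hc'].
      destruct (colored_once _ _ _ _ _ Hb Hc) as [-> <-].
      destruct (colored_once _ _ _ _ _ Hb' Hc') as [-> <-].
      exact (proj1 (proj2 (proj1 (st_ok a))) _ _ _ Hb Hb').
Qed.
End Stages.

Lemma color_classes_exist : exists Bs : R -> pset X,
  (forall xi eta x, Bs xi x -> Bs eta x -> xi = eta) /\
  (forall xi B, Big B -> exists x, B x /\ Bs xi x) /\
  (forall xi x, Bs xi x -> Bs xi (add x h) -> False) /\
  lt_S_covering add continuum (range Bs).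
Proof.
  destruct stages_exist as [st Hst].
  exists (color_class st); split; [|split; [|split]].
  - apply color_class_disjoint; auto.
  - apply color_class_meets; auto.
  - apply color_class_no_h_pair; auto.
  - apply color_classes_S_covering; auto.
Qed.
End Construction.

Lemma valid_tasks_card_le (X : Type) (x0 : X) (e : X -> R) (Big : pset (pset X)) :
  (forall x y, e x = e y -> x = y) -> card_le Big continuum ->
  card_le (valid_task X Big) continuum.
Proof.
  intros He [b [_ Hb]].
  destruct small_subsets_inj as [F HF]. destruct R_pairing as [pr Hpr].
  set (img := fun (G : pset X) r => exists g, G g /\ r = e g).
  assert (Himg : forall G, small G -> small (img G))
    by (intros G HG; apply (small_card_le _ G); [apply card_le_image; exact x0 | exact HG]).
  exists (fun t => match t with
                | Meet xi B => pr 0 (pr xi (b B))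
                | Cover G => pr 1 (F (img G)) end).
  split; [intros; exact I|].
  intros [xi B|G] [xi' B'|G'] Ht Ht' E; simpl in Ht, Ht';
    apply Hpr in E as [E1 E2]; try lra.
  - apply Hpr in E2 as [-> E2]. apply Hb in E2; auto. subst; reflexivity.
  - apply HF in E2; auto. f_equal; apply pset_ext; intro g.
    split; intro Hg;
      [assert (H : img G (e g)) by (exists g; auto); rewrite E2 in H
      | assert (H : img G' (e g)) by (exists g; auto); rewrite <- E2 in H];
      destruct H as [g' [Hg' Eg]]; apply He in Eg; subst; auto.
Qed.

Lemma color_partition_exists (X : Type) (add : X -> X -> X) (opp : X -> X) (zero : X)
  (e : X -> R) (Big : pset (pset X)) (h : X) :
  abelian_group add opp zero -> (forall x y, e x = e y -> x = y) -> ~ small (full X) ->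
  card_le Big continuum ->
  (forall B, Big B -> forall S : pset X, small S -> exists x, B x /\ ~ S x) ->
  h <> zero ->
  exists Bs : R -> pset X,
    (forall xi eta x, Bs xi x -> Bs eta x -> xi = eta) /\
    (forall xi B, Big B -> exists x, B x /\ Bs xi x) /\
    (forall xi x, Bs xi x -> Bs xi (add x h) -> False) /\
    lt_S_covering add continuum (range Bs).
Proof.
  intros Hgrp He HX HBig Havoid Hh.
  destruct small_segments_well_order as [W [Hwf [Htot Hseg]]].
  destruct (surjection_of_card_le _ (valid_tasks_card_le X zero e Big He HBig))
    as [tk [Htk Honto]].
  { exists (Cover X (fun _ => False)); apply small_empty; auto. }
  eapply color_classes_exist; eauto.
Qed.
End Continuum.

(** * Ideals and measurability *)

Definition many_outside_small_unions {X} (d : X -> X -> R) (I : pset (pset X)) : Prop :=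
  forall B, Borel d B -> ~ I B -> forall D : pset (pset X), subset D I -> small D ->
    card_eq (fun x => B x /\ ~ (exists A, D A /\ A x)) continuum.

Section Ideal.
Context {X : Type} (d : X -> X -> R) (I : pset (pset X)).

Lemma ideal_union2 A B : sigma_ideal I -> I A -> I B -> I (fun x => A x \/ B x).
Proof.
  intros [Hsub Hunion] HA HB.
  apply (Hsub _ (fun x => exists n : nat, (match n with O => A | _ => B end) x)).
  - intros x [H|H]; [exists O | exists 1%nat]; auto.
  - apply Hunion; intros [|n]; auto.
Qed.

Lemma not_ideal_of_meets (N : pset X) :
  sigma_ideal I -> has_Borel_base d I ->
  (forall A, Borel d A -> ~ I A -> exists x, A x /\ N x) ->
  forall A, Borel d A -> ~ I A -> ~ I (fun x => A x /\ N x).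
Proof.
  intros Hsig Hbase Hmeet A HA HnA HI. destruct (Hbase _ HI) as [C [HC [HsubC HIC]]].
  destruct (Hmeet (fun x => A x /\ ~ C x)) as [x [[HAx HCx] HNx]].
  - apply Borel_diff; auto.
  - intro H; apply HnA, (proj1 Hsig A (fun y => (A y /\ ~ C y) \/ C y)).
    + intros x Hx; destruct (classic (C x)); tauto.
    + apply ideal_union2; auto.
  - apply HCx, HsubC; split; auto.
Qed.

Lemma completely_nonmeasurable_of_meets (N : pset X) :
  sigma_ideal I -> has_Borel_base d I ->
  (forall A, Borel d A -> ~ I A -> exists x, A x /\ N x) ->
  (forall A, Borel d A -> ~ I A -> exists x, A x /\ ~ N x) ->
  completely_nonmeasurable d I N.
Proof.
  intros Hsig Hbase HN HnN A HA HnA.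
  split; apply not_ideal_of_meets; auto.
Qed.

Hypothesis I_many_outside : many_outside_small_unions d I.

Lemma empty_family_small : subset (fun _ : pset X => False) I /\ small (fun _ : pset X => False).
Proof. split; [intros A [] | apply small_empty; auto]. Qed.

Lemma card_continuum_of_many_outside : proper_ideal I -> card_eq (full X) continuum.
Proof.
  intro Hprop.
  destruct empty_family_small as [Hsub Hsmall].
  assert (H := I_many_outside _ (Borel_full d) Hprop _ Hsub Hsmall).
  replace (full X) with (fun x => full X x /\ ~ (exists A, (fun _ : pset X => False) A /\ A x));
    [exact H|].
  apply pset_ext; intro x; unfold full; firstorder.
Qed.

Lemma avoid_small_of_many_outside (Hsing : contains_singletons I) :
  forall B, Borel d B -> ~ I B -> forall S : pset X, small S -> exists x, B x /\ ~ S x.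
Proof.
  intros B HB HnB S HS.
  destruct empty_family_small as [Hsub0 Hsmall0].
  destruct (I_many_outside B HB HnB _ Hsub0 Hsmall0) as [_ [f0 [Hf0 _]]].
  set (D := fun A => exists y, S y /\ A = (fun z => z = y)).
  destruct (I_many_outside B HB HnB D) as [_ [f [Hf _]]].
  - intros A [y [_ ->]]; apply Hsing.
  - apply (small_card_le _ S); auto. apply card_le_image, f0, 0.
  - destruct (Hf 0 Logic.I) as [Hx Hout]. exists (f 0); split; auto.
    intro HSx; apply Hout; exists (fun z => z = f 0); split; auto; exists (f 0); auto.
Qed.
End Ideal.

Lemma exists_other {X} (x0 : X) : uncountable X -> exists y, y <> x0.
Proof.
  intro Hunc. apply NNPP; intro Hn. apply Hunc. exists (fun _ => 0%nat); intros x y _.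
  transitivity x0; [|symmetry]; apply NNPP; intro H; apply Hn; eauto.
Qed.

Theorem mainTheorem13 (X : Type) (d : X -> X -> R)
  (add : X -> X -> X) (opp : X -> X) (zero : X) (I : pset (pset X)) :
  abelian_polish_group d add opp zero ->
  uncountable X ->
  proper_ideal I -> sigma_ideal I -> translation_invariant add I ->
  contains_singletons I -> has_Borel_base d I ->
  (forall B, Borel d B -> ~ I B -> forall D : pset (pset X),
     subset D I -> card_lt D continuum ->
     card_eq (fun x => B x /\ ~ (exists A, D A /\ A x)) continuum) ->
  (exists a, (exists x y, d x y = a) /\ a <> 0 /\ forall x, I (fun y => d x y = a)) ->
  (forall (T : Type) (K : pset T), card_lt K continuum -> card_le (powerset K) continuum) ->
  exists Bs : R -> pset X,
    (forall xi eta, xi <> eta -> forall x, Bs xi x -> Bs eta x -> False) /\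
    (forall xi, completely_nonmeasurable d I (Bs xi)) /\
    (forall xi, ~ two_covering add (Bs xi)) /\
    lt_S_covering add continuum (range Bs).
Proof.
  intros [Hgrp [Hd [_ [Hsep _]]]] Hunc Hprop Hsig _ Hsing Hbase Hout _ Hpow.
  destruct (card_continuum_of_many_outside d I Hout Hprop) as [[e [_ He]] HRX].
  assert (He' : forall x y, e x = e y -> x = y) by (intros x y; apply He; exact Logic.I).
  assert (HRunc : ~ countable R)
    by (intros [g Hg]; apply Hunc; exists (fun x => g (e x)); auto).
  destruct (exists_other zero Hunc) as [h Hh].
  destruct (color_partition_exists HRunc Hpow X add opp zero e
    (fun B => Borel d B /\ ~ I B) h Hgrp He') as [Bs [Hdisj [Hmeet [Hpair Hcov]]]]; auto.
  - intro HX; exact (proj2 HX HRX).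
  - eapply card_le_trans; [|apply (Borel_card_le_continuum HRunc Hpow d Hd Hsep)].
    apply card_le_subset; intros B [HB _]; exact HB.
  - intros B [HB HnB]; apply (avoid_small_of_many_outside d I Hout Hsing B HB HnB).
  - exists Bs; split; [|split; [|split]]; auto.
    + intros xi eta Hne x H1 H2; exact (Hne (Hdisj _ _ _ H1 H2)).
    + intro xi; apply completely_nonmeasurable_of_meets; [exact Hsig | exact Hbase | |].
      * intros A HA HnA; exact (Hmeet xi A (conj HA HnA)).
      * intros A HA HnA; destruct (Hmeet (xi + 1) A (conj HA HnA)) as [x [Hx Hx']].
        exists x; split; auto; intro Hx''. specialize (Hdisj _ _ _ Hx'' Hx'); lra.
    + intro xi; exact (not_two_covering_of_no_pair Hgrp (Bs xi) h Hh (Hpair xi)).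
Qed.
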